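(* Let $\alpha>-1$, $M\ge0$, $N\ge0$. For $n=1,2,3,\ldots$ let $$L_n^{\alpha,M,N}(x)=A_0L_n^{(\alpha)}(x)+A_1\frac{d}{dx}L_n^{(\alpha)}(x)+A_2\frac{d^2}{dx^2}L_n^{(\alpha)}(x),$$ where $$A_0=1+M\binom{n+\alpha}{n-1}+\frac{n(\alpha+2)-(\alpha+1)}{(\alpha+1)(\alpha+3)}N\binom{n+\alpha}{n-2}+\frac{MN}{(\alpha+1)(\alpha+2)}\binom{n+\alpha}{n-1}\binom{n+\alpha+1}{n-2},$$ $$A_1=M\binom{n+\alpha}{n}+\frac{n-1}{\alpha+1}N\binom{n+\alpha}{n-1}+\frac{2MN}{(\alpha+1)^2}\binom{n+\alpha}{n}\binom{n+\alpha+1}{n-2},$$ $$A_2=\frac{N}{\alpha+1}\binom{n+\alpha}{n-1}+\frac{MN}{(\alpha+1)^2}\binom{n+\alpha}{n}\binom{n+\alpha+1}{n-1}.$$ Then for every $n\ge1$, $y=L_n^{\alpha,M,N}$ satisfies the (infinite order) differential equation $$\sum_{i=0}^{\infty}b_i^*(\alpha,x)y^{(i)}(x)+M\sum_{i=0}^{\infty}c_i^*(\alpha,x)y^{(i)}(x)=0,$$ where $b_i^*(\alpha,x)=\frac{1}{i!}\sum_{j=0}^i(-1)^j\binom{i}{j}(\alpha+1)_{i-j}x^j$ and $c_i^*(\alpha,x)=\frac{(-1)^i}{i!}x^i$ for $i=0,1,2,\ldots$.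
   Context: $L_n^{(\alpha)}(x)=\binom{n+\alpha}{n}\,{}_1F_1\!\left(\begin{matrix}-n\\ \alpha+1\end{matrix};x\right)=\sum_{k=0}^n\frac{(-n)_k}{(\alpha+1)_k}\binom{n+\alpha}{n}\frac{x^k}{k!}$ is the classical Laguerre polynomial; $(a)_k$ is the Pochhammer symbol and $\binom{\gamma}{m}$ the generalized binomial coefficient (zero when $m<0$). The polynomials $L_n^{\alpha,M,N}$ are orthogonal with respect to the Sobolev inner product $\langle f,g\rangle=\frac{1}{\Gamma(\alpha+1)}\int_0^\infty x^\alpha e^{-x}f(x)g(x)\,dx+Mf(0)g(0)+Nf'(0)g'(0)$. The infinite sums are finite when applied to polynomials. *)

From HB Require Import structures.
From mathcomp Require Import all_boot all_order all_algebra.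
Set Implicit Arguments. Unset Strict Implicit. Unset Printing Implicit Defensive.
Import Order.TTheory GRing.Theory Num.Theory.
Local Open Scope ring_scope.

Definition poch {R : pzRingType} (a : R) (k : nat) : R :=
  \prod_(i < k) (a + i%:R).

Definition gbinom {R : fieldType} (g : R) (m : int) : R :=
  match m with
  | Posz k => (\prod_(i < k) (g - i%:R)) / (k`!)%:R
  | Negz _ => 0
  end.

Definition laguerre {R : fieldType} (alpha : R) (n : nat) : {poly R} :=
  \sum_(k < n.+1)
     ((poch (- n%:R) k) / (poch (alpha + 1) k) * gbinom (n%:R + alpha) n
        / (k`!)%:R) *: 'X^k.

Definition A0 {R : fieldType} (alpha M N : R) (n : nat) : R :=
  1 + M * gbinom (n%:R + alpha) (n%:Z - 1)
  + (n%:R * (alpha + 2) - (alpha + 1)) / ((alpha + 1) * (alpha + 3))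
      * N * gbinom (n%:R + alpha) (n%:Z - 2)
  + M * N / ((alpha + 1) * (alpha + 2))
      * gbinom (n%:R + alpha) (n%:Z - 1) * gbinom (n%:R + alpha + 1) (n%:Z - 2).

Definition A1 {R : fieldType} (alpha M N : R) (n : nat) : R :=
  M * gbinom (n%:R + alpha) n
  + (n%:R - 1) / (alpha + 1) * N * gbinom (n%:R + alpha) (n%:Z - 1)
  + 2 * M * N / (alpha + 1) ^+ 2
      * gbinom (n%:R + alpha) n * gbinom (n%:R + alpha + 1) (n%:Z - 2).

Definition A2 {R : fieldType} (alpha M N : R) (n : nat) : R :=
  N / (alpha + 1) * gbinom (n%:R + alpha) (n%:Z - 1)
  + M * N / (alpha + 1) ^+ 2
      * gbinom (n%:R + alpha) n * gbinom (n%:R + alpha + 1) (n%:Z - 1).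

Definition sobLaguerre {R : fieldType} (alpha M N : R) (n : nat) : {poly R} :=
  A0 alpha M N n *: laguerre alpha n
  + A1 alpha M N n *: (laguerre alpha n)^`()
  + A2 alpha M N n *: (laguerre alpha n)^`(2).

Definition bstar {R : fieldType} (alpha x : R) (i : nat) : R :=
  (i`!)%:R^-1 * \sum_(j < i.+1)
      (-1) ^+ j * ('C(i, j))%:R * poch (alpha + 1) (i - j) * x ^+ j.

Definition cstar {R : fieldType} (x : R) (i : nat) : R :=
  (-1) ^+ i / (i`!)%:R * x ^+ i.

From HB Require Import structures.
From mathcomp Require Import all_boot all_order all_algebra.
From mathcomp Require Import ring zify.
Set Implicit Arguments. Unset Strict Implicit. Unset Printing Implicit Defensive.
Import Order.TTheory GRing.Theory Num.Theory.
Local Open Scope ring_scope.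

(* Taylor's formula at x gives sum_i (-x)^i/i! p^(i)(x) = p(0).  Hence the c*-series
   of p is p(0), and the b*-series, the Cauchy product of that series with
   sum_k (alpha+1)_k t^k/k!, is the moment functional I(p) = sum_k (alpha+1)_k p_k
   of the Laguerre weight; the equation reads I(y) + M y(0) = 0, linear in y.
   The coefficients of L_n^(alpha) are (-1)^k C(n,k) binom(n+alpha,n) / (alpha+1)_k, so
   the alternating sum  sum_k (-1)^k C(m,k) / (b+k)_j = (j)_m / (b)_(m+j)  yields
   I(L) = 0, I(L') = -1 and I(L'') = n - 1.  With the values of L, L', L'' at 0, the
   equation for y = A0 L + A1 L' + A2 L'' becomes a rational identity in alpha, M, N, n. *)

Section Pochhammer.
Variable R : comPzRingType.
Implicit Types (b : R) (k m : nat).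

Lemma poch0 b : poch b 0 = 1.
Proof. by rewrite /poch big_ord0. Qed.

Lemma pochS b k : poch b k.+1 = poch b k * (b + k%:R).
Proof. by rewrite /poch big_ord_recr. Qed.

Lemma pochSl b k : poch b k.+1 = b * poch (b + 1) k.
Proof.
rewrite /poch big_ord_recl addr0; congr (_ * _).
by apply: eq_bigr => i _; rewrite lift0 -addn1 natrD addrA addrAC.
Qed.

Lemma pochD b m k : poch b (m + k) = poch b m * poch (b + m%:R) k.
Proof.
rewrite /poch big_split_ord /=; congr (_ * _); apply: eq_bigr => i _.
by rewrite natrD addrA.
Qed.

Lemma poch_oppn n k : poch (- n%:R) k = (-1) ^+ k * (n ^_ k)%:R :> R.
Proof.
elim: k => [|k IH]; first by rewrite poch0 expr0 mul1r.
rewrite pochS IH ffactnSr natrM exprS.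
have [le_kn | lt_nk] := leqP k n; first by rewrite natrB //; ring.
by rewrite ffact_small //; ring.
Qed.

Lemma poch_natS j m : (j`!)%:R * poch j.+1%:R m = ((j + m)`!)%:R :> R.
Proof.
elim: m => [|m IH]; first by rewrite poch0 mulr1 addn0.
by rewrite pochS mulrA IH addnS factS natrM mulrC -natrD addSn.
Qed.

Lemma poch0S m : poch 0 m.+1 = 0 :> R.
Proof. by rewrite pochSl mul0r. Qed.

End Pochhammer.

Lemma poch_gt0 (R : numDomainType) (b : R) k : 0 < b -> 0 < poch b k.
Proof. by move=> b_gt0; apply: prodr_gt0 => i _; rewrite ltr_wpDr. Qed.

Lemma sum_alt_binom_div_poch (R : numFieldType) (b : R) (j m N : nat) :
  0 < b -> (m < N)%N ->
  \sum_(k < N) (-1) ^+ k * 'C(m, k)%:R / poch (b + k%:R) j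
    = poch j%:R m / poch b (m + j).
Proof.
elim: m b N => [|m IH] b [//|N] b_gt0 lt_mN.
  rewrite big_ord_recl big1 => [|k _]; last by rewrite bin0n mulr0 mul0r.
  by rewrite addr0 poch0 expr0 mul1r addr0.
have pascal (k : 'I_N) : (-1) ^+ k.+1 * 'C(m.+1, k.+1)%:R / poch (b + k.+1%:R) j
    = (-1) ^+ k.+1 * 'C(m, k.+1)%:R / poch (b + k.+1%:R) j
      - (-1) ^+ k * 'C(m, k)%:R / poch (b + 1 + k%:R) j.
  by rewrite binS natrD -natr1 (addrAC b) addrA exprS; ring.
rewrite (_ : \sum_(k < N.+1) _
    = \sum_(k < N.+1) (-1) ^+ k * 'C(m, k)%:R / poch (b + k%:R) j
      - \sum_(k < N) (-1) ^+ k * 'C(m, k)%:R / poch (b + 1 + k%:R) j); last first.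
  by rewrite !big_ord_recl (eq_bigr _ (fun k _ => pascal k)) sumrB !bin0 addrA.
rewrite !IH ?ltr_wpDr ?(ltnW lt_mN) //.
have b_neq0 : b != 0 by rewrite gt_eqF.
have Pb_neq0 : poch b (m + j) != 0 by rewrite gt_eqF ?poch_gt0.
have bmj_neq0 : b + (m + j)%:R != 0 by rewrite gt_eqF ?ltr_wpDr.
have -> : poch (b + 1) (m + j) = poch b (m + j) * (b + (m + j)%:R) / b.
  by rewrite -pochS pochSl mulrC mulKf.
rewrite addSn pochS pochS natrD in bmj_neq0 *.
by field; rewrite Pb_neq0 bmj_neq0 b_neq0.
Qed.

Lemma sum_antidiagonal (V : nmodType) (F : nat -> nat -> V) K :
  \sum_(i < K) \sum_(j < i.+1) F j (i - j)%N = \sum_(k < K) \sum_(j < K - k) F j k.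
Proof.
elim: K => [|K IH]; first by rewrite !big_ord0.
rewrite big_ord_recr /= IH [RHS]big_ord_recr /= subSnn big_ord1.
rewrite [in RHS](eq_bigr (fun k : 'I_K => \sum_(j < K - k) F j k + F (K - k)%N k)); last first.
  by move=> k _; rewrite subSn ?big_ord_recr // ltnW.
rewrite big_split /= -addrA big_ord_recl subn0 [F ord0 K + _]addrC; congr (_ + _).
congr (_ + _); rewrite [RHS](reindex_inj rev_ord_inj) /=; apply: eq_bigr => j _.
by rewrite subKn.
Qed.

Section Derivatives.
Variable R : nzRingType.
Implicit Types p : {poly R}.

Lemma derivn_add p j k : p^`(j + k) = p^`(k)^`(j).
Proof. by rewrite /derivn iterD. Qed.

Lemma size_derivn_le p K k : (size p <= K)%N -> (size p^`(k) <= K - k)%N.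
Proof.
move=> le_pK; apply/leq_sizeP => j le_Kj; rewrite coef_derivn nth_default ?mul0rn //.
by rewrite (leq_trans le_pK) // -leq_subLR.
Qed.

End Derivatives.

Section Moment.
Variable R : comNzRingType.
Implicit Types (b : R) (p q : {poly R}).

(* (b)_k is the k-th moment of x^(b-1) e^(-x) / Gamma(b) on (0, oo). *)
Definition moment b p : R := \sum_(k < size p) poch b k * p`_k.

Lemma momentE b p K : (size p <= K)%N -> moment b p = \sum_(k < K) poch b k * p`_k.
Proof.
move=> le_pK; rewrite /moment (big_ord_widen K (fun k => poch b k * p`_k) le_pK) big_mkcond.
by apply: eq_bigr => k _; case: ltnP => // le_pk; rewrite nth_default ?mulr0.
Qed.

Lemma momentD b p q : moment b (p + q) = moment b p + moment b q.
Proof.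
rewrite !(@momentE _ _ (maxn (size p) (size q))) ?leq_maxl ?leq_maxr ?size_polyD //.
by rewrite -big_split; apply: eq_bigr => k _; rewrite coefD mulrDr.
Qed.

Lemma momentZ b c p : moment b (c *: p) = c * moment b p.
Proof.
rewrite !(@momentE _ _ (size p)) ?size_scale_leq // mulr_sumr.
by apply: eq_bigr => k _; rewrite coefZ mulrCA.
Qed.

End Moment.

Section TaylorSeries.
Variable R : numFieldType.
Implicit Types (x : R) (p : {poly R}).

Lemma natr_fact_neq0 k : (k`!)%:R != 0 :> R.
Proof. by rewrite pnatr_eq0 -lt0n fact_gt0. Qed.

Lemma taylor_at0 p x K : (size p <= K)%N ->
  \sum_(i < K) (-x) ^+ i / (i`!)%:R * (p^`(i)).[x] = p`_0.
Proof.
move=> le_pK; rewrite -horner_coef0 -{2}(addrN x).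
rewrite (@nderiv_taylor_wide _ K p x (- x) (mulrC x (- x)) le_pK); apply: eq_bigr => i _.
by rewrite nderivn_def hornerMn -[_.[x] *+ _]mulr_natr mulrCA divfK ?natr_fact_neq0.
Qed.

Lemma bstarE alpha x i : bstar alpha x i =
  \sum_(j < i.+1) (-x) ^+ j / (j`!)%:R * (poch (alpha + 1) (i - j) / ((i - j)`!)%:R).
Proof.
rewrite /bstar mulr_sumr; apply: eq_bigr => [[j /= le_ji]] _.
have /(congr1 (GRing.natmul (1 : R))) := bin_fact (le_ji : (j <= i)%N).
rewrite !natrM => <-; rewrite [(- x) ^+ _]exprNn.
have bin_neq0 : 'C(i, j)%:R != 0 :> R by rewrite pnatr_eq0 -lt0n bin_gt0.
by field; rewrite bin_neq0 !natr_fact_neq0.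
Qed.

Lemma bstar_series alpha p x K : (size p <= K)%N ->
  \sum_(i < K) bstar alpha x i * (p^`(i)).[x] = moment (alpha + 1) p.
Proof.
move=> le_pK; under eq_bigr => i _ do rewrite bstarE mulr_suml.
pose F j k := (-x) ^+ j / (j`!)%:R * (poch (alpha + 1) k / (k`!)%:R) * (p^`(j + k)).[x].
transitivity (\sum_(i < K) \sum_(j < i.+1) F j (i - j)%N).
  by apply: eq_bigr => i _; apply: eq_bigr => j _; rewrite /F subnKC // -ltnS.
rewrite sum_antidiagonal (momentE _ le_pK); apply: eq_bigr => k _.
under eq_bigr => j _ do rewrite /F mulrAC derivn_add.
rewrite -mulr_suml taylor_at0 ?size_derivn_le // coef_derivn addn0 ffactnn.
by rewrite -[p`_k *+ _]mulr_natr; field; apply: natr_fact_neq0.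
Qed.

Lemma cstar_series p x K : (size p <= K)%N ->
  \sum_(i < K) cstar x i * (p^`(i)).[x] = p`_0.
Proof.
move=> le_pK; rewrite -(taylor_at0 x le_pK); apply: eq_bigr => i _.
by rewrite /cstar [(- x) ^+ _]exprNn [(-1) ^+ i / _ * _]mulrAC.
Qed.

End TaylorSeries.

Lemma bin_addn_ffact n j k : ('C(n, j + k) * (j + k) ^_ j = n ^_ j * 'C(n - j, k))%N.
Proof.
elim: j n => [|j IH] n; first by rewrite ffactn0 muln1 mul1n subn0.
rewrite addSn ffactSS mulnCA mulnA -mul_bin_diag -mulnA IH ffactnS mulnA.
by congr (_ * 'C(_, k))%N; lia.
Qed.

Lemma gbinom_subn (R : numFieldType) (c : R) (n j : nat) : 0 < c + 1 ->
  gbinom (n%:R + c) (n%:Z - j%:Z)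
    = poch (c + 1) n * (n ^_ j)%:R / (poch (c + 1) j * (n`!)%:R).
Proof.
move=> c1_gt0; have [le_jn | lt_nj] := leqP j n; last first.
  have : n%:Z - j%:Z < 0 by rewrite subr_lt0 ltz_nat.
  by move: (n%:Z - j%:Z) => [] // k _; rewrite ffact_small // mulr0 mul0r.
rewrite subzn // /gbinom; move: (n - j)%N (subnKC le_jn) => m <-.
have -> : \prod_(i < m) ((j + m)%:R + c - i%:R) = poch (c + 1 + j%:R) m.
  rewrite (reindex_inj rev_ord_inj) /poch; apply: eq_bigr => i _ /=.
  by rewrite natrB // !natrD; ring.
have fact_jm := ffact_fact (leq_addr m j); rewrite addKn in fact_jm.
have /(congr1 (GRing.natmul (1 : R))) := fact_jm; rewrite natrM => <-.
rewrite pochD.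
have poch_neq0 : poch (c + 1) j != 0 by rewrite gt_eqF ?poch_gt0.
have ffact_neq0 : ((j + m) ^_ j)%:R != 0 :> R by rewrite pnatr_eq0 -lt0n ffact_gt0 leq_addr.
by field; rewrite poch_neq0 ffact_neq0 natr_fact_neq0.
Qed.

Section Laguerre.
Variables (R : numFieldType) (alpha : R).
Hypothesis alpha_gt : -1 < alpha.
Variable n : nat.

Local Notation L := (laguerre alpha n).
Local Notation B := (gbinom (n%:R + alpha) n).

Lemma alpha1_gt0 : 0 < alpha + 1.
Proof. by rewrite -ltrBlDr sub0r. Qed.

Lemma poch_alpha1_neq0 k : poch (alpha + 1) k != 0.
Proof. by rewrite gt_eqF ?poch_gt0 ?alpha1_gt0. Qed.

Lemma coef_laguerre k : L`_k = (-1) ^+ k * 'C(n, k)%:R * B / poch (alpha + 1) k.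
Proof.
pose c i := poch (- n%:R) i / poch (alpha + 1) i * B / (i`!)%:R.
rewrite /laguerre -(poly_def n.+1 c) coef_poly /c; case: ltnP => [_ | lt_nk].
  rewrite poch_oppn -bin_ffact natrM.
  by field; rewrite poch_alpha1_neq0 natr_fact_neq0.
by rewrite bin_small // mulr0 mul0r mul0r.
Qed.

Lemma size_laguerre : (size L <= n.+1)%N.
Proof.
by apply/leq_sizeP => k lt_nk; rewrite coef_laguerre bin_small // mulr0 !mul0r.
Qed.

Lemma coef0_derivn_laguerre j :
  (L^`(j))`_0 = (-1) ^+ j * (n ^_ j)%:R * B / poch (alpha + 1) j.
Proof.
by rewrite coef_derivn addn0 ffactnn coef_laguerre -mulr_natr -bin_ffact natrM; ring.
Qed.

Lemma gbinom_laguerre : B = poch (alpha + 1) n / (n`!)%:R.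
Proof. by have := gbinom_subn n 0 alpha1_gt0; rewrite subr0 ffactn0 poch0 mul1r mulr1. Qed.

Lemma moment_derivn_laguerre j :
  moment (alpha + 1) (L^`(j)) = (-1) ^+ j * (n ^_ j)%:R * poch j%:R (n - j) / (n`!)%:R.
Proof.
have [lt_nj | le_jn] := ltnP n j.
  rewrite derivn_poly0 ?(leq_trans size_laguerre) // /moment size_poly0 big_ord0.
  by rewrite ffact_small // mulr0 !mul0r.
have term k : poch (alpha + 1) k * (L^`(j))`_k = (-1) ^+ j * (n ^_ j)%:R * B
    * ((-1) ^+ k * 'C(n - j, k)%:R / poch (alpha + 1 + k%:R) j).
  have ffact_neq0 : ((j + k) ^_ j)%:R != 0 :> R.
    by rewrite pnatr_eq0 -lt0n ffact_gt0 leq_addr.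
  rewrite coef_derivn coef_laguerre -mulr_natr [in poch _ (j + k)]addnC pochD exprD.
  have -> : 'C(n, j + k)%:R = (n ^_ j)%:R * 'C(n - j, k)%:R / ((j + k) ^_ j)%:R :> R.
    by rewrite -natrM -bin_addn_ffact natrM mulfK.
  have poch_neq0 : poch (alpha + 1 + k%:R) j != 0.
    by rewrite gt_eqF // poch_gt0 // ltr_wpDr // alpha1_gt0.
  by field; rewrite ffact_neq0 poch_neq0 poch_alpha1_neq0.
rewrite (momentE _ (size_derivn_le j size_laguerre)).
under eq_bigr => k _ do rewrite term.
rewrite -mulr_sumr sum_alt_binom_div_poch ?alpha1_gt0 ?subnK // ?gbinom_laguerre.
  by field; rewrite poch_alpha1_neq0 natr_fact_neq0.
by rewrite subSn // ltnSn.
Qed.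

Lemma moment_laguerre : (0 < n)%N -> moment (alpha + 1) L = 0.
Proof.
move=> n_gt0; have := moment_derivn_laguerre 0; rewrite derivn0 => ->.
by rewrite -(prednK n_gt0) poch0S mulr0 mul0r.
Qed.

Lemma moment_derivnS_laguerre j : (0 < n)%N ->
  moment (alpha + 1) (L^`(j.+1)) = (-1) ^+ j.+1 * 'C(n.-1, j)%:R.
Proof.
move=> n_gt0; rewrite moment_derivn_laguerre -(prednK n_gt0) ffactnS subSS /=.
set m := n.-1.
have [le_jm | lt_mj] := leqP j m; last first.
  by rewrite bin_small // ffact_small // muln0 !(mulr0, mul0r).
have := poch_natS R j (m - j); rewrite subnKC // => fact_m.
rewrite -bin_ffact !natrM -fact_m.
by field; rewrite natr_fact_neq0 gt_eqF ?poch_gt0 ?ltr0Sn // addrC natr1 pnatr_eq0.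
Qed.

End Laguerre.

Lemma sobLaguerre_balance (R : numFieldType) (alpha M N : R) n :
  -1 < alpha -> (0 < n)%N ->
  let L := laguerre alpha n in
  A0 alpha M N n * (moment (alpha + 1) L + M * L`_0)
  + A1 alpha M N n * (moment (alpha + 1) L^`() + M * L^`()`_0)
  + A2 alpha M N n * (moment (alpha + 1) L^`(2) + M * L^`(2)`_0) = 0.
Proof.
move=> alpha_gt n_gt0 L.
have a_gt0 := alpha1_gt0 alpha_gt; have a1_gt0 : 0 < alpha + 1 + 1 by rewrite ltr_wpDr.
rewrite -derivn1 moment_laguerre // !moment_derivnS_laguerre //.
rewrite coef_laguerre // !coef0_derivn_laguerre // !bin0 bin1 /A0 /A1 /A2.
rewrite -[n%:R + alpha + 1]addrA !gbinom_laguerre // !(gbinom_subn n 1) ?(gbinom_subn n 2) //.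
have -> : poch (alpha + 1 + 1) n = poch (alpha + 1) n * (alpha + 1 + n%:R) / (alpha + 1).
  by rewrite -pochS pochSl mulrC mulKf ?gt_eqF.
have n1E : n.-1%:R = n%:R - 1 :> R by rewrite -subn1 natrB.
rewrite !pochS !poch0 !ffactnS !ffactn0 !muln1 !natrM n1E.
have a2_gt0 : 0 < alpha + 1 + 1 + 1 by rewrite ltr_wpDr.
by field; rewrite natr_fact_neq0 !gt_eqF.
Qed.

Theorem mainTheorem3 (R : realFieldType) (alpha M N : R) :
  -1 < alpha -> 0 <= M -> 0 <= N ->
  forall n : nat, (1 <= n)%N ->
  forall (x : R) (K : nat), (size (sobLaguerre alpha M N n) <= K)%N ->
    \sum_(i < K) bstar alpha x i * ((sobLaguerre alpha M N n)^`(i)).[x]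
    + M * \sum_(i < K) cstar x i * ((sobLaguerre alpha M N n)^`(i)).[x] = 0.
Proof.
move=> alpha_gt _ _ n n_gt0 x K le_pK.
rewrite bstar_series // cstar_series // /sobLaguerre.
rewrite !momentD !momentZ !coefD !coefZ.
apply: etrans (sobLaguerre_balance M N alpha_gt n_gt0); ring.
Qed.
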